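(* In the reduction instance $NTP([a_j]_{j\in A},W)$, every optimal schedule $S^*$ satisfies, for every $k\in A$, $b_{i_k}\in\{0,a_k\}$, where $b_{i_k}$ is the number of employees bumped by the critical employee $i_k$ in $S^*$.
   Context: Reduction instance. Let $N\ge1$, $A=\{1,\dots,N\}$, positive integers $a_1,\dots,a_N$, positive integer $W\le\sum_{j\in A}a_j$. Set $M=N+\sum_{j\in A}a_j+1$, employees $\mathcal E=\{1,\dots,M\}$ (smaller index = more senior). For $k\in A$: $i_k=k+\sum_{j=1}^{k-1}a_j$ (critical employees), $\mathcal E^S_k=\{i: i_k<i\le i_k+a_k\}$ (stable block), $\mathcal E^S=\bigcup_k\mathcal E^S_k$. Response delays: $r_{i_k}=\sum_{j=1}^{k}a_j$; for $i\in\mathcal E^S_k$, $r_i=\sum_{j=1}^{k-1}a_j$; $r_M=\sum_{j\in A}a_j$. Let $C^*_0=2\sum_j a_j$ and $H=C^*_0-W$. A schedule $S=(s_i,e_i)_{i\in\mathcal E}$ has $s_i\ge0$, $e_i=s_i+r_i$; it is feasible if $s_1\le\dots\le s_M$ and $e_i\le H$ for all $i$. $b_i=|\{j: i<j,\ e_j<e_i\}|$ (potential bumps caused by $i$), $B(S)=\sum_i b_i$. A schedule is optimal if it is feasible and minimizes $B(S)$ among feasible schedules. *)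

From Stdlib Require Import Reals List Arith Lia.
Open Scope R_scope.

(* Instance data: N, a : nat -> nat (only a 1 .. a N used), W. *)
Fixpoint psum (a : nat -> nat) (k : nat) : nat :=
  match k with O => O | S k' => (psum a k' + a k)%nat end.

Definition numM (N : nat) (a : nat -> nat) : nat := (N + psum a N + 1)%nat.

Definition crit (a : nat -> nat) (k : nat) : nat := (k + psum a (k - 1))%nat.

Definition in_stable (a : nat -> nat) (k i : nat) : Prop :=
  (crit a k < i <= crit a k + a k)%nat.

Definition H_bound (N : nat) (a : nat -> nat) (W : nat) : R :=
  INR (2 * psum a N) - INR W.

(* response delay r_i: r_{i_k} = sum_{j<=k} a_j; r_i = sum_{j<k} a_j for i in
   stable block k; r_M = sum_j a_j (other indices are irrelevant). *)
Fixpoint delay_aux (a : nat -> nat) (i k : nat) : nat :=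
  match k with
  | O => O
  | S k' => if Nat.eqb i (crit a k) then psum a k
            else if andb (Nat.ltb (crit a k) i) (Nat.leb i (crit a k + a k))
                 then psum a k' else delay_aux a i k'
  end.

Definition delay (N : nat) (a : nat -> nat) (i : nat) : nat :=
  if Nat.eqb i (numM N a) then psum a N else delay_aux a i N.

(* a schedule is given by start times s : nat -> R (employees 1..M);
   e_i = s_i + r_i *)
Definition finish (N : nat) (a : nat -> nat) (s : nat -> R) (i : nat) : R :=
  s i + INR (delay N a i).

Definition feasible (N : nat) (a : nat -> nat) (W : nat) (s : nat -> R) : Prop :=
  (forall i, (1 <= i <= numM N a)%nat -> 0 <= s i) /\
  (forall i j, (1 <= i)%nat -> (i <= j <= numM N a)%nat -> s i <= s j) /\
  (forall i, (1 <= i <= numM N a)%nat -> finish N a s i <= H_bound N a W).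

Definition bumps (N : nat) (a : nat -> nat) (s : nat -> R) (i : nat) : nat :=
  length (filter (fun j => if Rlt_dec (finish N a s j) (finish N a s i) then true else false)
                 (seq (S i) (numM N a - i))).

Definition total_bumps (N : nat) (a : nat -> nat) (s : nat -> R) : nat :=
  fold_right Nat.add O (map (bumps N a s) (seq 1 (numM N a))).

Definition optimal (N : nat) (a : nat -> nat) (W : nat) (s : nat -> R) : Prop :=
  feasible N a W s /\
  forall s', feasible N a W s' -> (total_bumps N a s <= total_bumps N a s')%nat.

(** If the critical employee [i_k] bumps some but not all of its stable block, some
    member [j] of the block finishes no earlier than [i_k], i.e. starts at least
    [a_k] after it.  Postponing every member of the block to start no earlier than
    [s_{i_k} + a_k] keeps the schedule feasible (the block then finishes together
    with [i_k], and [j] already bounds the later starts), never increases a bump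
    count, and makes [i_k] bump nobody: it contradicts optimality.  Employees after
    the block are never bumped by [i_k], because they start no earlier and have a
    response delay at least [r_{i_k}]. *)

From Stdlib Require Import Reals List Arith Lia Lra Classical.

Lemma length_filter_le_in {A} (f g : A -> bool) (l : list A) :
  (forall x, In x l -> f x = true -> g x = true) ->
  (length (filter f l) <= length (filter g l))%nat.
Proof.
  induction l as [|x l IH]; intros Hfg; simpl; [lia|].
  specialize (IH (fun y Hy => Hfg y (or_intror Hy))).
  destruct (f x) eqn:Ef.
  - rewrite (Hfg x (or_introl eq_refl) Ef); simpl; lia.
  - destruct (g x); simpl; lia.
Qed.

Lemma list_sum_map_le {A} (f g : A -> nat) (l : list A) :
  (forall x, In x l -> (f x <= g x)%nat) ->
  (list_sum (map f l) <= list_sum (map g l))%nat.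
Proof.
  induction l as [|x l IH]; intros Hle; simpl; [lia|].
  pose proof (Hle x (or_introl eq_refl)).
  pose proof (IH (fun y Hy => Hle y (or_intror Hy))). lia.
Qed.

Lemma list_sum_map_lt {A} (f g : A -> nat) (l : list A) (x0 : A) :
  (forall x, In x l -> (f x <= g x)%nat) -> In x0 l -> (f x0 < g x0)%nat ->
  (list_sum (map f l) < list_sum (map g l))%nat.
Proof.
  induction l as [|x l IH]; intros Hle Hin Hlt; [destruct Hin|]; simpl.
  pose proof (Hle x (or_introl eq_refl)).
  pose proof (list_sum_map_le f g l (fun y Hy => Hle y (or_intror Hy))).
  destruct Hin as [->|Hin]; [lia|].
  pose proof (IH (fun y Hy => Hle y (or_intror Hy)) Hin Hlt). lia.
Qed.

Lemma psum_mono a k k' : (k <= k')%nat -> (psum a k <= psum a k')%nat.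
Proof. induction 1; simpl; lia. Qed.

Lemma psum_pred a k : (1 <= k)%nat -> psum a k = (psum a (k - 1) + a k)%nat.
Proof. intros. destruct k; [lia|]. simpl. rewrite Nat.sub_0_r. reflexivity. Qed.

Lemma crit_S a k : (1 <= k)%nat -> crit a (S k) = (crit a k + a k + 1)%nat.
Proof.
  intros. unfold crit. replace (S k - 1)%nat with k by lia.
  rewrite (psum_pred a k) by lia. lia.
Qed.

Lemma crit_lt_crit a k k' :
  (1 <= k)%nat -> (k < k')%nat -> (crit a k + a k < crit a k')%nat.
Proof.
  intros Hk. induction 1 as [|k' Hkk' IH]; rewrite crit_S by lia; lia.
Qed.

Lemma numM_crit N a : (1 <= N)%nat -> numM N a = (crit a N + a N + 1)%nat.
Proof. intros. unfold crit, numM. rewrite (psum_pred a N) by lia. lia. Qed.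

Lemma crit_lt_numM N a k : (1 <= k <= N)%nat -> (crit a k + a k < numM N a)%nat.
Proof.
  intros Hk. rewrite numM_crit by lia.
  destruct (Nat.eq_dec k N) as [->|]; [lia|].
  pose proof (crit_lt_crit a k N ltac:(lia) ltac:(lia)). lia.
Qed.

Lemma crit_bounds N a k : (1 <= k <= N)%nat -> (1 <= crit a k <= numM N a)%nat.
Proof. intros Hk. pose proof (crit_lt_numM N a k Hk). unfold crit in *. lia. Qed.

Lemma in_stable_dec a k i : {in_stable a k i} + {~ in_stable a k i}.
Proof.
  unfold in_stable.
  destruct (lt_dec (crit a k) i); [destruct (le_dec i (crit a k + a k))|];
    [left|right|right]; lia.
Qed.

Lemma delay_aux_crit a n k :
  (1 <= k <= n)%nat -> delay_aux a (crit a k) n = psum a k.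
Proof.
  induction n as [|n IH]; intros Hk; [lia|]. cbn [delay_aux].
  destruct (Nat.eq_dec k (S n)) as [->|Hne]; [now rewrite Nat.eqb_refl|].
  pose proof (crit_lt_crit a k (S n) ltac:(lia) ltac:(lia)).
  replace (crit a k =? crit a (S n)) with false by (symmetry; apply Nat.eqb_neq; lia).
  replace (crit a (S n) <? crit a k) with false by (symmetry; apply Nat.ltb_ge; lia).
  apply IH. lia.
Qed.

Lemma delay_aux_stable a n k i :
  (1 <= k <= n)%nat -> in_stable a k i -> delay_aux a i n = psum a (k - 1).
Proof.
  unfold in_stable. induction n as [|n IH]; intros Hk Hi; [lia|]. cbn [delay_aux].
  destruct (Nat.eq_dec k (S n)) as [->|Hne].
  - replace (i =? crit a (S n)) with false by (symmetry; apply Nat.eqb_neq; lia).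
    replace (crit a (S n) <? i) with true by (symmetry; apply Nat.ltb_lt; lia).
    replace (i <=? crit a (S n) + a (S n)) with true by (symmetry; apply Nat.leb_le; lia).
    simpl. now rewrite Nat.sub_0_r.
  - pose proof (crit_lt_crit a k (S n) ltac:(lia) ltac:(lia)).
    replace (i =? crit a (S n)) with false by (symmetry; apply Nat.eqb_neq; lia).
    replace (crit a (S n) <? i) with false by (symmetry; apply Nat.ltb_ge; lia).
    apply IH; lia.
Qed.

Lemma delay_aux_ge a n k i : (1 <= k)%nat -> (k < n)%nat ->
  (crit a k + a k < i <= crit a n + a n)%nat -> (psum a k <= delay_aux a i n)%nat.
Proof.
  induction n as [|n IH]; intros Hk Hkn Hi; [lia|]. cbn [delay_aux].
  destruct (Nat.eqb_spec i (crit a (S n))); [apply psum_mono; lia|].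
  destruct (Nat.ltb_spec (crit a (S n)) i); destruct (Nat.leb_spec i (crit a (S n) + a (S n)));
    simpl; try (apply psum_mono; lia).
  all: try lia.
  all: rewrite crit_S in * by lia; destruct (Nat.eq_dec k n) as [->|]; [lia|]; apply IH; lia.
Qed.

Lemma delay_crit N a k : (1 <= k <= N)%nat -> delay N a (crit a k) = psum a k.
Proof.
  intros Hk. unfold delay. pose proof (crit_lt_numM N a k Hk).
  replace (crit a k =? numM N a) with false by (symmetry; apply Nat.eqb_neq; lia).
  apply delay_aux_crit; lia.
Qed.

Lemma delay_stable N a k i :
  (1 <= k <= N)%nat -> in_stable a k i -> delay N a i = psum a (k - 1).
Proof.
  intros Hk Hi. unfold delay. pose proof (crit_lt_numM N a k Hk). unfold in_stable in Hi.
  replace (i =? numM N a) with false by (symmetry; apply Nat.eqb_neq; lia).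
  apply delay_aux_stable; auto; lia.
Qed.

Lemma delay_after_block N a k j : (1 <= k <= N)%nat ->
  (crit a k + a k < j <= numM N a)%nat -> (psum a k <= delay N a j)%nat.
Proof.
  intros Hk Hj. unfold delay. destruct (Nat.eqb_spec j (numM N a)); [apply psum_mono; lia|].
  rewrite numM_crit in * by lia.
  destruct (Nat.eq_dec k N) as [->|]; [lia|]. apply delay_aux_ge; lia.
Qed.

Lemma delay_after_stable N a k i j : (1 <= k <= N)%nat -> in_stable a k i ->
  (i < j <= numM N a)%nat -> (delay N a i <= delay N a j)%nat.
Proof.
  intros Hk Hi Hj. rewrite (delay_stable N a k i) by auto.
  destruct (in_stable_dec a k j) as [Hsj|Hsj].
  - rewrite (delay_stable N a k j) by auto. lia.
  - unfold in_stable in *. pose proof (psum_mono a (k - 1) k ltac:(lia)).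
    pose proof (delay_after_block N a k j Hk ltac:(lia)). lia.
Qed.

Section Bumps.

Variables (N : nat) (a : nat -> nat).

Lemma bumps_eq_0 (s : nat -> R) (i : nat) :
  (forall j, (i < j <= numM N a)%nat -> finish N a s i <= finish N a s j) ->
  bumps N a s i = 0%nat.
Proof.
  intros Hfin. unfold bumps.
  rewrite (filter_ext_in _ (fun _ => false)); [now rewrite filter_false|].
  intros j Hj. apply in_seq in Hj.
  destruct Rlt_dec; [|reflexivity].
  specialize (Hfin j ltac:(lia)). lra.
Qed.

Lemma bumps_le (s s' : nat -> R) (i : nat) :
  finish N a s' i <= finish N a s i ->
  (forall j, (i < j <= numM N a)%nat -> finish N a s j <= finish N a s' j) ->
  (bumps N a s' i <= bumps N a s i)%nat.
Proof.
  intros Hi Hj. apply length_filter_le_in. intros j Hin. apply in_seq in Hin.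
  specialize (Hj j ltac:(lia)).
  do 2 destruct Rlt_dec; try lra; discriminate.
Qed.

Lemma total_bumps_lt (s s' : nat -> R) (i0 : nat) :
  (forall i, (1 <= i <= numM N a)%nat -> (bumps N a s' i <= bumps N a s i)%nat) ->
  (1 <= i0 <= numM N a)%nat -> (bumps N a s' i0 < bumps N a s i0)%nat ->
  (total_bumps N a s' < total_bumps N a s)%nat.
Proof.
  intros Hle Hi0 Hlt. apply (list_sum_map_lt _ _ _ i0); auto.
  - intros i Hi. apply in_seq in Hi. apply Hle. lia.
  - apply in_seq. lia.
Qed.

End Bumps.

Definition postpone_block (a : nat -> nat) (k : nat) (s : nat -> R) (i : nat) : R :=
  if in_stable_dec a k i then Rmax (s i) (s (crit a k) + INR (a k)) else s i.

Lemma postpone_block_ge a k s i : s i <= postpone_block a k s i.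
Proof. unfold postpone_block. destruct in_stable_dec; [apply Rmax_l|lra]. Qed.

Lemma postpone_block_out a k s i : ~ in_stable a k i -> postpone_block a k s i = s i.
Proof. intros Hi. unfold postpone_block. now destruct in_stable_dec. Qed.

Section CriticalEmployee.

Variables (N : nat) (a : nat -> nat) (W k : nat).
Hypothesis Hk : (1 <= k <= N)%nat.

Lemma finish_crit s :
  finish N a s (crit a k) = s (crit a k) + INR (psum a (k - 1)) + INR (a k).
Proof.
  unfold finish. rewrite delay_crit, psum_pred, plus_INR by (auto; lia). lra.
Qed.

Lemma finish_stable s i :
  in_stable a k i -> finish N a s i = s i + INR (psum a (k - 1)).
Proof. intros Hi. unfold finish. now rewrite (delay_stable N a k i). Qed.

Lemma finish_crit_le_after_block s j : feasible N a W s ->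
  (crit a k + a k < j <= numM N a)%nat -> finish N a s (crit a k) <= finish N a s j.
Proof.
  intros [_ [Hmono _]] Hj. unfold finish. rewrite delay_crit by auto.
  pose proof (le_INR _ _ (delay_after_block N a k j Hk Hj)).
  assert (s (crit a k) <= s j) by (apply Hmono; pose proof (crit_bounds N a k Hk); lia). lra.
Qed.

Lemma bumps_stable s i : feasible N a W s -> in_stable a k i -> bumps N a s i = 0%nat.
Proof.
  intros [_ [Hmono _]] Hi. apply bumps_eq_0. intros j Hj. unfold finish.
  pose proof (le_INR _ _ (delay_after_stable N a k i j Hk Hi Hj)).
  assert (s i <= s j) by (apply Hmono; unfold in_stable in *; lia). lra.
Qed.

Lemma bumps_crit_all_stable s : feasible N a W s ->
  (forall j, in_stable a k j -> finish N a s j < finish N a s (crit a k)) ->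
  bumps N a s (crit a k) = a k.
Proof.
  intros Hfeas Hall. pose proof (crit_lt_numM N a k Hk). unfold bumps.
  replace (numM N a - crit a k)%nat with (a k + (numM N a - crit a k - a k))%nat by lia.
  rewrite seq_app, filter_app, length_app.
  rewrite (filter_ext_in _ (fun _ => true) (seq (S (crit a k)) (a k))).
  2:{ intros j Hj. apply in_seq in Hj.
      destruct Rlt_dec as [|Hnlt]; [reflexivity|].
      exfalso. apply Hnlt, Hall. unfold in_stable. lia. }
  rewrite (filter_ext_in _ (fun _ => false) (seq (S (crit a k) + a k) _)).
  2:{ intros j Hj. apply in_seq in Hj.
      pose proof (finish_crit_le_after_block s j Hfeas ltac:(lia)).
      destruct Rlt_dec; [lra|reflexivity]. }
  rewrite filter_true, filter_false, length_seq. simpl. lia.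
Qed.

Section Postponement.

Variables (s : nat -> R) (j0 : nat).
Hypothesis Hfeas : feasible N a W s.
Hypothesis Hj0 : in_stable a k j0.
Hypothesis Hj0_late : finish N a s (crit a k) <= finish N a s j0.

Let s' := postpone_block a k s.

Lemma start_crit_le_late_stable : s (crit a k) + INR (a k) <= s j0.
Proof.
  rewrite finish_crit, (finish_stable s j0 Hj0) in Hj0_late. lra.
Qed.

Lemma postpone_block_feasible : feasible N a W s'.
Proof.
  destruct Hfeas as [Hnn [Hmono Hfin]]. pose proof start_crit_le_late_stable.
  split; [|split].
  - intros i Hi. pose proof (Hnn i Hi). pose proof (postpone_block_ge a k s i). unfold s'. lra.
  - intros i j Hi Hij. unfold s', postpone_block.
    destruct (in_stable_dec a k i) as [Hsi|Hsi], (in_stable_dec a k j) as [Hsj|Hsj].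
    + apply Rle_max_compat_r, Hmono; lia.
    + unfold in_stable in *.
      assert (s j0 <= s j) by (apply Hmono; lia).
      apply Rmax_lub; [apply Hmono; lia|lra].
    + eapply Rle_trans; [apply (Hmono i j); lia|apply Rmax_l].
    + apply Hmono; lia.
  - intros i Hi. destruct (in_stable_dec a k i) as [Hsi|Hsi].
    + pose proof (Hfin i Hi) as Hfi. pose proof (Hfin _ (crit_bounds N a k Hk)) as Hfc.
      rewrite finish_stable in * by auto. rewrite finish_crit in Hfc.
      unfold s', postpone_block. destruct in_stable_dec; [|contradiction].
      assert (Rmax (s i) (s (crit a k) + INR (a k)) <= H_bound N a W - INR (psum a (k - 1)))
        by (apply Rmax_lub; lra).
      lra.
    + unfold finish, s'. rewrite postpone_block_out by auto. apply Hfin, Hi.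
Qed.

Lemma postpone_block_bumps_le i :
  (1 <= i <= numM N a)%nat -> (bumps N a s' i <= bumps N a s i)%nat.
Proof.
  intros Hi. destruct (in_stable_dec a k i) as [Hsi|Hsi].
  - rewrite (bumps_stable s' i postpone_block_feasible Hsi). lia.
  - apply bumps_le.
    + unfold finish, s'. rewrite postpone_block_out by auto. lra.
    + intros j _. unfold finish. pose proof (postpone_block_ge a k s j). unfold s'. lra.
Qed.

Lemma postpone_block_bumps_crit : bumps N a s' (crit a k) = 0%nat.
Proof.
  apply bumps_eq_0. intros j Hj.
  destruct (in_stable_dec a k j) as [Hsj|Hsj].
  - rewrite finish_crit, finish_stable by auto.
    unfold s', postpone_block. destruct (in_stable_dec a k (crit a k)) as [Hc|_].
    { unfold in_stable in Hc. lia. }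
    destruct in_stable_dec; [|contradiction].
    pose proof (Rmax_r (s j) (s (crit a k) + INR (a k))). lra.
  - apply (finish_crit_le_after_block s' j postpone_block_feasible).
    unfold in_stable in Hsj. lia.
Qed.

End Postponement.

Lemma optimal_bumps_crit_late_stable s j0 : optimal N a W s ->
  in_stable a k j0 -> finish N a s (crit a k) <= finish N a s j0 ->
  bumps N a s (crit a k) = 0%nat.
Proof.
  intros [Hfeas Hmin] Hj0 Hlate.
  destruct (Nat.eq_dec (bumps N a s (crit a k)) 0) as [|Hpos]; [assumption|exfalso].
  pose proof (Hmin _ (postpone_block_feasible s j0 Hfeas Hj0 Hlate)).
  enough (total_bumps N a (postpone_block a k s) < total_bumps N a s)%nat by lia.
  apply (total_bumps_lt N a _ _ (crit a k)).
  - apply (postpone_block_bumps_le s j0 Hfeas Hj0 Hlate).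
  - apply crit_bounds, Hk.
  - rewrite (postpone_block_bumps_crit s j0 Hfeas Hj0 Hlate). lia.
Qed.

End CriticalEmployee.

Theorem lemma1 (N : nat) (a : nat -> nat) (W : nat) (s : nat -> R) :
  (1 <= N)%nat ->
  (forall j, (1 <= j <= N)%nat -> (1 <= a j)%nat) ->
  (1 <= W)%nat -> (W <= psum a N)%nat ->
  optimal N a W s ->
  forall k, (1 <= k <= N)%nat ->
    bumps N a s (crit a k) = 0%nat \/ bumps N a s (crit a k) = a k.
Proof.
  intros _ _ _ _ Hopt k Hk.
  destruct (classic (exists j, in_stable a k j /\
                               finish N a s (crit a k) <= finish N a s j))
    as [[j [Hj Hlate]]|Hnone].
  - left. exact (optimal_bumps_crit_late_stable N a W k Hk s j Hopt Hj Hlate).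
  - right. apply (bumps_crit_all_stable N a W k Hk s (proj1 Hopt)).
    intros j Hj. apply Rnot_le_lt. intros Hlate. apply Hnone. now exists j.
Qed.
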